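(* Let $A,B,C$ be an LR triple on $V$ and let $\mathcal I$ be the set of idempotent centralizers for $A,B,C$ (a subalgebra of $\mathrm{End}(V)$). (i) If $A,B,C$ is trivial (i.e. $d=0$), then $I$ is a basis of $\mathcal I$. (ii) If $A,B,C$ is nonbipartite, then $I$ is a basis of $\mathcal I$. (iii) If $A,B,C$ is bipartite and nontrivial (so $d$ is even), then $I,J$ is a basis of $\mathcal I$, where $J=\sum_{j=0}^{d/2}E_{2j}$.
   Context: Let $V$ be a vector space over a field $\mathbb F$ with $\dim V=d+1$. A decomposition of $V$ is a sequence $(V_i)_{i=0}^d$ of one-dimensional subspaces with $V=\bigoplus V_i$; $X$ lowers it if $XV_i=V_{i-1}$ ($1\le i\le d$), $XV_0=0$; raises it if $XV_i=V_{i+1}$ ($0\le i\le d-1$), $XV_d=0$. An ordered pair $X,Y$ is an LR pair if some decomposition (unique, the $(X,Y)$-decomposition) is lowered by $X$ and raised by $Y$. An LR triple is $A,B,C\in\mathrm{End}(V)$ with $A,B$; $B,C$; $C,A$ LR pairs; it is trivial if $d=0$. Let $E_i,E'_i,E''_i$ ($0\le i\le d$) be the projections onto the $i$-th components of the $(A,B)$-, $(B,C)$-, $(C,A)$-decompositions. The triple is bipartite if $\mathrm{tr}(CE_i)=\mathrm{tr}(AE'_i)=\mathrm{tr}(BE''_i)=0$ for all $i$, nonbipartite otherwise. An idempotent centralizer for $A,B,C$ is an element of $\mathrm{End}(V)$ commuting with every $E_i,E'_i,E''_i$ ($0\le i\le d$). *)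

(* V = F^(d+1) as row vectors 'rV[F]_(d.+1); End(V) = 'M[F]_(d.+1)
   acting on the right (v |-> v *m X). Subspaces are represented by square
   matrices via their row spaces (mxalgebra). *)
From HB Require Import structures.
From mathcomp Require Import all_boot all_order all_algebra.
Set Implicit Arguments. Unset Strict Implicit. Unset Printing Implicit Defensive.
Import Order.TTheory GRing.Theory Num.Theory.
Local Open Scope ring_scope.

Section LR.
Variables (F : fieldType) (d : nat).
Local Notation M := 'M[F]_(d.+1).

Definition decomposition (Vs : nat -> M) : Prop :=
  (forall i, (i <= d)%N -> \rank (Vs i) = 1%N) /\
  (\sum_(i < d.+1) Vs i == 1%:M)%MS /\
  mxdirect (\sum_(i < d.+1) Vs i).

Definition lowers (X : M) (Vs : nat -> M) : Prop :=
  (forall i, (0 < i <= d)%N -> (Vs i *m X == Vs i.-1)%MS) /\ Vs 0%N *m X = 0.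

Definition raises (X : M) (Vs : nat -> M) : Prop :=
  (forall i, (i < d)%N -> (Vs i *m X == Vs i.+1)%MS) /\ Vs d *m X = 0.

Definition XY_decomposition (X Y : M) (Vs : nat -> M) : Prop :=
  decomposition Vs /\ lowers X Vs /\ raises Y Vs.

Definition LR_pair (X Y : M) : Prop := exists Vs, XY_decomposition X Y Vs.

Definition LR_triple (A B C : M) : Prop :=
  LR_pair A B /\ LR_pair B C /\ LR_pair C A.

Definition comp_proj (Vs : nat -> M) (i : nat) : M :=
  proj_mx (Vs i) (\sum_(j < d.+1 | (j : nat) != i) Vs j)%MS.

End LR.

From HB Require Import structures.
From mathcomp Require Import all_boot all_order all_algebra.
From mathcomp Require Import zify.
Set Implicit Arguments. Unset Strict Implicit. Unset Printing Implicit Defensive.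
Import Order.TTheory GRing.Theory Num.Theory.
Local Open Scope ring_scope.

(* Pick bases P, P', P'' adapted to the (A,B)-, (B,C)- and (C,A)-decompositions; in each,
   the lowering map is subdiagonal and the raising map superdiagonal, with nonzero
   off-diagonal entries. X commutes with every E_i iff its matrix in P is diagonal, and
   tr (C E_i) is the i-th diagonal entry of C in P.
   Since ker A^k is spanned both by the first k vectors of P and by the last k vectors of
   P'', C maps the former span into the span of the first k+1 vectors of P; dually with B
   and P'. So C is tridiagonal in P, with nonzero superdiagonal.
   A centralizer X is also diagonal in P', where BC and CB are diagonal, so X commutes with
   BC and CB. Read in P, the entries (i, i+2) of BC make the diagonal of X 2-periodic, and a
   nonzero diagonal entry of C makes BC or CB link two adjacent indices: X is scalar.
   In the bipartite case C exchanges even and odd coordinates in P, and the vectors of P'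
   and P'' come from ker B and ker A by iterating C, so they have pure parity; hence J,
   the projection onto the even coordinates of P, is diagonal in all three bases. *)

Lemma period2_eq_odd (T : Type) (f : nat -> T) (d : nat) :
  (forall i, (i.+2 <= d)%N -> f i = f i.+2) ->
  forall i, (i <= d)%N -> f i = f (odd i).
Proof.
move=> f2; elim/ltn_ind => -[|[|i]] IH hi //=.
by rewrite -f2 // IH ?negbK //; lia.
Qed.

Section ShiftMatrices.
Variables (F : fieldType) (d : nat).
Local Notation n := d.+1.
Local Notation M := 'M[F]_n.
Implicit Types (S T D : M) (z : 'rV[F]_n).

(* Matrices act on row vectors from the right: in a basis adapted to a decomposition that
   X lowers, row i of the matrix of X is supported exactly at column i-1. *)
Definition lowering_mx S := forall i j : 'I_n, (S i j != 0) = (i == j.+1 :> nat).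
Definition raising_mx S := forall i j : 'I_n, (S i j != 0) = (j == i.+1 :> nat).

Lemma lowering_mx_eq0 S (i j : 'I_n) : lowering_mx S -> i != j.+1 :> nat -> S i j = 0.
Proof. by move=> hS ne; apply/eqP; rewrite -[_ == 0]negbK hS (negbTE ne). Qed.

Lemma raising_mx_eq0 S (i j : 'I_n) : raising_mx S -> j != i.+1 :> nat -> S i j = 0.
Proof. by move=> hS ne; apply/eqP; rewrite -[_ == 0]negbK hS (negbTE ne). Qed.

Lemma mulmx_col_single p (R : 'M[F]_(p, n)) S i (k j : 'I_n) :
  (forall m, m != k -> S m j = 0) -> (R *m S) i j = R i k * S k j.
Proof. by move=> h; rewrite mxE (bigD1 k) //= big1 ?addr0 // => m /h ->; rewrite mulr0. Qed.

Lemma mulmx_row_single p (R : 'M[F]_(n, p)) S (i k : 'I_n) j :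
  (forall m, m != k -> S i m = 0) -> (S *m R) i j = S i k * R k j.
Proof. by move=> h; rewrite mxE (bigD1 k) //= big1 ?addr0 // => m /h ->; rewrite mul0r. Qed.

(* At the boundary index these formulas refer to index 0 ([inord] wraps around, [.-1]
   truncates), where the corresponding entry of S vanishes. *)
Lemma mul_lowering_mxE S z (j : 'I_n) : lowering_mx S ->
  (z *m S) 0 j = z 0 (inord j.+1) * S (inord j.+1) j.
Proof.
move=> hS; apply: mulmx_col_single => m ne; apply: lowering_mx_eq0 => //.
by apply: contra ne => /eqP e; apply/eqP/val_inj; rewrite /= -e inordK.
Qed.

Lemma mul_raising_mxE S z (j : 'I_n) : raising_mx S ->
  (z *m S) 0 j = z 0 (inord j.-1) * S (inord j.-1) j.
Proof.
move=> hS; apply: mulmx_col_single => m ne; apply: raising_mx_eq0 => //.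
apply: contra ne => /eqP e; apply/eqP/val_inj.
by rewrite /= e inordK //= (leq_trans (leqnSn _)).
Qed.

Lemma row_raising_mx S (i : 'I_n) : raising_mx S ->
  row i S = S i (inord i.+1) *: delta_mx 0 (inord i.+1).
Proof.
move=> hS; apply/rowP => j; rewrite !mxE eqxx /=.
case: (eqVneq j (inord i.+1)) => [->|ne]; first by rewrite mulr1.
rewrite mulr0 raising_mx_eq0 //; apply: contra_neq ne => e.
by apply/val_inj; rewrite /= e inordK // -e.
Qed.

Lemma row_lowering_mx S (i : 'I_n) : lowering_mx S ->
  row i S = S i (inord i.-1) *: delta_mx 0 (inord i.-1).
Proof.
move=> hS; apply/rowP => j; rewrite !mxE eqxx /=.
case: (eqVneq j (inord i.-1)) => [->|ne]; first by rewrite mulr1.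
rewrite mulr0 lowering_mx_eq0 //; apply: contra_neq ne => e.
by apply/val_inj; rewrite /= e /= inordK // (leq_trans (leqnSn _)) -?e.
Qed.

Definition head_supp k z := forall m : 'I_n, (k <= m)%N -> z 0 m = 0.
Definition tail_supp k z := forall m : 'I_n, (m + k <= d)%N -> z 0 m = 0.

Lemma head_supp0 z : head_supp 0 z <-> z = 0.
Proof. by split=> [h|-> m _]; [apply/rowP => m; rewrite h ?mxE | rewrite mxE]. Qed.

Lemma tail_supp0 z : tail_supp 0 z <-> z = 0.
Proof.
split=> [h|-> m _]; last by rewrite mxE.
by apply/rowP => m; rewrite h ?mxE // addn0 -ltnS.
Qed.

Lemma head_supp_delta (i : 'I_n) : head_supp i.+1 (delta_mx 0 i).
Proof. by move=> m hm; rewrite mxE andbC; case: eqP => // e; move: hm; rewrite e ltnn. Qed.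

Lemma tail_supp_delta (i : 'I_n) : tail_supp (d - i).+1 (delta_mx 0 i).
Proof. by move=> m hm; rewrite mxE andbC; case: eqP => // e; move: hm; rewrite e; lia. Qed.

Lemma head_supp_mul_lowering S z k : lowering_mx S ->
  head_supp k (z *m S) <-> head_supp k.+1 z.
Proof.
move=> hS; split=> h m hm.
  have m0 : (0 < m)%N by apply: leq_trans hm.
  have hj : (m.-1 < n)%N by rewrite prednK // ltnW.
  have nz : S m (Ordinal hj) != 0 by rewrite hS /= prednK.
  have hk : (k <= m.-1)%N by rewrite -ltnS prednK.
  have := h (Ordinal hj) hk; rewrite mul_lowering_mxE //=.
  have -> : inord m.-1.+1 = m by apply/val_inj; rewrite /= prednK // inordK.
  by move/eqP; rewrite mulf_eq0 (negbTE nz) orbF => /eqP.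
rewrite mul_lowering_mxE //; case: (eqVneq (S (inord m.+1) m) 0) => [->|]; first by rewrite mulr0.
by rewrite hS => /eqP e; rewrite h ?mul0r // e.
Qed.

Lemma tail_supp_mul_raising S z k : raising_mx S ->
  tail_supp k (z *m S) <-> tail_supp k.+1 z.
Proof.
move=> hS; split=> h m hm.
  have hj : (m.+1 < n)%N by rewrite ltnS; lia.
  have nz : S m (Ordinal hj) != 0 by rewrite hS.
  have hk : (m.+1 + k <= d)%N by lia.
  have := h (Ordinal hj) hk; rewrite mul_raising_mxE //= inord_val.
  by move/eqP; rewrite mulf_eq0 (negbTE nz) orbF => /eqP.
rewrite mul_raising_mxE //; case: (eqVneq (S (inord m.-1) m) 0) => [->|]; first by rewrite mulr0.
by rewrite hS => /eqP e; rewrite h ?mul0r //; lia.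
Qed.

Lemma tail_supp_mul_lowering S z k : lowering_mx S ->
  tail_supp k z -> tail_supp k.+1 (z *m S).
Proof.
move=> hS h m hm; rewrite mul_lowering_mxE //.
case: (eqVneq (S (inord m.+1) m) 0) => [->|]; first by rewrite mulr0.
by rewrite hS => /eqP e; rewrite h ?mul0r //; lia.
Qed.

Lemma head_supp_mul_raising S z k : raising_mx S ->
  head_supp k z -> head_supp k.+1 (z *m S).
Proof.
move=> hS h m hm; rewrite mul_raising_mxE //.
case: (eqVneq (S (inord m.-1) m) 0) => [->|]; first by rewrite mulr0.
by rewrite hS => /eqP e; rewrite h ?mul0r //; lia.
Qed.

Lemma mul_lowering_raising_diag S T : lowering_mx S -> raising_mx T -> is_diag_mx (S *m T).
Proof.
move=> hS hT; apply/is_diag_mxP => i j ne; rewrite mxE big1 // => k _.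
case: (eqVneq (S i k) 0) => [->|]; first by rewrite mul0r.
case: (eqVneq (T k j) 0) => [->|]; first by rewrite mulr0.
by rewrite hS hT => /eqP e1 /eqP e2; case/eqP: ne; lia.
Qed.

Lemma mul_raising_lowering_diag S T : raising_mx S -> lowering_mx T -> is_diag_mx (S *m T).
Proof.
move=> hS hT; apply/is_diag_mxP => i j ne; rewrite mxE big1 // => k _.
case: (eqVneq (S i k) 0) => [->|]; first by rewrite mul0r.
case: (eqVneq (T k j) 0) => [->|]; first by rewrite mulr0.
by rewrite hS hT => /eqP e1 /eqP e2; case/eqP: ne; lia.
Qed.

Lemma is_diag_scalarD D a b : is_diag_mx D -> is_diag_mx (a%:M + b *: D).
Proof.
move=> /is_diag_mxP h; apply/is_diag_mxP => i j ne.
by rewrite !mxE h // -val_eqE (negbTE ne) mulr0 addr0.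
Qed.

Lemma diag_comm_mx D D' : is_diag_mx D -> is_diag_mx D' -> comm_mx D D'.
Proof. by move=> /diag_mxP[e ->] /diag_mxP[e' ->]; apply: diag_mx_comm. Qed.

Lemma diag_comm_mx_entry D S (i j : 'I_n) :
  is_diag_mx D -> comm_mx D S -> S i j != 0 -> D i i = D j j.
Proof.
move=> /diag_mxP[e ->] /(congr1 (fun Z : M => Z i j)) /=.
rewrite mul_diag_mx mul_mx_diag !mxE !eqxx !mulr1n [S i j * _]mulrC => /eqP.
by rewrite -subr_eq0 -mulrBl mulf_eq0 subr_eq0 => /orP[/eqP|->].
Qed.

Lemma mul_mx_delta_diagE S (i k j : 'I_n) : (S *m delta_mx i i) k j = S k i * (j == i)%:R.
Proof.
rewrite mxE (bigD1 i) //= big1 => [|l /negbTE li]; last by rewrite mxE li mulr0.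
by rewrite mxE eqxx addr0.
Qed.

Lemma mxtrace_mul_delta S (i : 'I_n) : \tr (S *m delta_mx i i) = S i i.
Proof.
rewrite /mxtrace (bigD1 i) //= big1 => [|k /negbTE ki]; last by rewrite mul_mx_delta_diagE ki mulr0.
by rewrite mul_mx_delta_diagE eqxx mulr1 addr0.
Qed.

Lemma comm_delta_diag S : (forall i : 'I_n, comm_mx S (delta_mx i i)) <-> is_diag_mx S.
Proof.
have Sdelta := mul_mx_delta_diagE S.
have deltaS i k j : (delta_mx i i *m S) k j = (k == i)%:R * S i j.
  rewrite mxE (bigD1 i) //= big1 => [|l /negbTE li]; last by rewrite mxE li andbF mul0r.
  by rewrite mxE eqxx andbT addr0.
split=> [h|/is_diag_mxP h i].
  apply/is_diag_mxP => k j ne; have /(congr1 (fun Z : M => Z k j)) := h j.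
  by rewrite /= Sdelta deltaS eqxx -val_eqE (negbTE ne) mulr1 mul0r.
apply/matrixP => k j; rewrite Sdelta deltaS.
case: (eqVneq j i) => [->|ji]; case: (eqVneq k i) => [->|ki] /=.
- by rewrite mulr1 mul1r.
- by rewrite h ?mulr1 ?mul0r // val_eqE.
- by rewrite mulr0 mul1r h // val_eqE eq_sym.
- by rewrite mulr0 mul0r.
Qed.

End ShiftMatrices.

Arguments mulmx_col_single {F d p R S i} k {j}.
Arguments mulmx_row_single {F d p R S i} k {j}.
Arguments head_supp_delta {F d} i.
Arguments tail_supp_delta {F d} i.

Section Parity.
Variables (F : fieldType) (d : nat).
Local Notation n := d.+1.
Implicit Types (z : 'rV[F]_n) (b : bool).

Definition parity_supp b z := forall m : 'I_n, odd m != b -> z 0 m = 0.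

Definition even_diag : 'M[F]_n := diag_mx (\row_(i < n) (~~ odd i)%:R).

Lemma parity_supp_submx b y z : (y <= z)%MS -> parity_supp b z -> parity_supp b y.
Proof. by move=> /sub_rVP[c ->] h m hm; rewrite mxE h ?mulr0. Qed.

Lemma mul_even_diag b z : parity_supp b z -> z *m even_diag = (~~ b)%:R *: z.
Proof.
move=> h; apply/rowP => m; rewrite mul_mx_diag !mxE.
case: (eqVneq (odd m) b) => [<-|/(h m)->]; [exact: mulrC|by rewrite mul0r mulr0].
Qed.

Lemma head_supp1_parity z : head_supp 1 z -> parity_supp false z.
Proof. by move=> h [[|m] lt_m] //= _; apply: h. Qed.

Lemma tail_supp1_parity z : tail_supp 1 z -> parity_supp (odd d) z.
Proof.
move=> h m hm; apply: h; rewrite addn1 ltn_neqAle -ltnS ltn_ord andbT.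
by apply: contra_neq hm => ->.
Qed.

Lemma sum_even_delta :
  \sum_(j < (d./2).+1) delta_mx (inord (2 * j)%N) (inord (2 * j)%N) = even_diag.
Proof.
have lt2 (j : 'I_(d./2).+1) : (2 * j < n)%N by have := ltn_ord j; lia.
rewrite /even_diag diag_mx_sum_delta (bigID (fun i : 'I_n => odd i)) /=.
rewrite [X in X + _]big1 ?add0r => [|i odd_i]; last by rewrite mxE odd_i scale0r.
rewrite (reindex_onto (fun j : 'I_(d./2).+1 => inord (2 * j)%N) (fun i : 'I_n => inord i./2)).
  apply: eq_big => [j|j _]; last by rewrite mxE inordK ?oddM ?scale1r.
  rewrite inordK // oddM /=; apply/esym/eqP/val_inj; rewrite /= inordK; have := ltn_ord j; lia.
move=> i /negbTE odd_i; apply/val_inj; rewrite /= !inordK; have := ltn_ord i; lia.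
Qed.

End Parity.

Arguments even_diag {F d}.

Section LRBases.
Variables (F : fieldType) (d : nat).
Local Notation n := d.+1.
Local Notation M := 'M[F]_n.
Implicit Types (P Q X Y Z : M) (z : 'rV[F]_n).

Lemma conjmxM_unit P X Y : P \in unitmx -> conjmx P (X *m Y) = conjmx P X *m conjmx P Y.
Proof. by move=> uP; rewrite conjmxM ?inE ?stablemx_unit. Qed.

Lemma conjmx_unit_inj P : P \in unitmx -> injective (conjmx P).
Proof. by move=> uP; apply: (can_inj (g := conjmx (invmx P))) => X; apply: conjmxK. Qed.

Lemma comm_mx_conjmx P X Y : P \in unitmx ->
  comm_mx (conjmx P X) (conjmx P Y) <-> comm_mx X Y.
Proof.
move=> uP; rewrite /comm_mx -!conjmxM_unit //.
by split=> [/(conjmx_unit_inj uP)|->].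
Qed.

Definition coords P z := z *m invmx P.

Lemma coords_mul P X z : P \in unitmx -> coords P (z *m X) = coords P z *m conjmx P X.
Proof. by move=> uP; rewrite /coords conjumx // !mulmxA mulmxKV. Qed.

Lemma coords_row P (i : 'I_n) : P \in unitmx -> coords P (row i P) = delta_mx 0 i.
Proof. by move=> uP; rewrite /coords -row_mul mulmxV // rowE mulmx1. Qed.

Lemma coords_eq0 P z : P \in unitmx -> coords P z = 0 <-> z = 0.
Proof.
move=> uP; split=> [h|->]; last by rewrite /coords mul0mx.
by rewrite -(mulmxKV uP z) -/(coords P z) h mul0mx.
Qed.

Lemma conjmxE P X (i j : 'I_n) : P \in unitmx ->
  conjmx P X i j = coords P (row i P *m X) 0 j.
Proof. by move=> uP; rewrite conjumx // /coords -!row_mul [RHS]mxE. Qed.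

Lemma conjmx_shift_neq0 P X (i k : 'I_n) a : P \in unitmx -> a != 0 ->
  row i P *m X = a *: row k P -> forall j, (conjmx P X i j != 0) = (j == k).
Proof.
move=> uP a0 e j; rewrite conjmxE // e /coords -scalemxAl -/(coords P _) coords_row //.
rewrite !mxE eqxx mulf_eq0 negb_or a0 /=.
by case: (j == k); rewrite ?oner_neq0 ?eqxx.
Qed.

Lemma conjmx_row_eq0 P X (i j : 'I_n) : P \in unitmx ->
  row i P *m X = 0 -> conjmx P X i j = 0.
Proof. by move=> uP e; rewrite conjmxE // e /coords mul0mx mxE. Qed.

Lemma conjmx_scalarD P a b Y : P \in unitmx ->
  conjmx P (a%:M + b *: Y) = a%:M + b *: conjmx P Y.
Proof.
move=> uP; rewrite !conjumx // mulmxDr mulmxDl -scalemxAr -scalemxAl; congr (_ + _).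
by rewrite -conjumx // conjmx_scalar ?row_free_unit.
Qed.

Lemma row_mul_conjmx P X (i : 'I_n) : P \in unitmx ->
  row i P *m X = row i (conjmx P X) *m P.
Proof. by move=> uP; rewrite conjumx // !row_mul mulmxKV. Qed.

Lemma row_mul_lowering P X (i : 'I_n) : P \in unitmx -> lowering_mx (conjmx P X) ->
  row i P *m X = conjmx P X i (inord i.-1) *: row (inord i.-1) P.
Proof.
by move=> uP lowX; rewrite row_mul_conjmx // (row_lowering_mx _ lowX) -scalemxAl -rowE.
Qed.

Lemma row_mul_raising P X (i : 'I_n) : P \in unitmx -> raising_mx (conjmx P X) ->
  row i P *m X = conjmx P X i (inord i.+1) *: row (inord i.+1) P.
Proof.
by move=> uP raiseX; rewrite row_mul_conjmx // (row_raising_mx _ raiseX) -scalemxAl -rowE.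
Qed.

Lemma conjmx_eigen_rows_diag Q Y : Q \in unitmx ->
  (forall i, exists c, row i Q *m Y = c *: row i Q) -> is_diag_mx (conjmx Q Y).
Proof.
move=> uQ h; apply/is_diag_mxP => i j ne; have [c e] := h i.
have /negbTE ji : j != i by rewrite -val_eqE eq_sym.
by rewrite conjmxE // e /coords -scalemxAl -/(coords Q _) coords_row // !mxE ji andbF mulr0.
Qed.

Lemma mul_even_diag_conj P b z : P \in unitmx -> parity_supp b (coords P z) ->
  z *m conjmx (invmx P) even_diag = (~~ b)%:R *: z.
Proof.
move=> uP h; rewrite conjVmx // !mulmxA -/(coords P z) (mul_even_diag h).
by rewrite -scalemxAl mulmxKV.
Qed.

Lemma scalar_even_diag_free P a b : P \in unitmx -> (0 < d)%N ->
  a%:M + b *: conjmx (invmx P) even_diag = 0 -> a = 0 /\ b = 0.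
Proof.
move=> uP d0 /(congr1 (conjmx P)); rewrite conjmx_scalarD // conjmxVK // conjmx0 => e.
have := congr1 (fun Z : M => Z (inord 1) (inord 1)) e; have := congr1 (fun Z : M => Z 0 0) e.
by rewrite !mxE !eqxx /= inordK // mulr1 mulr0 addr0 => ab0 a0; rewrite a0 add0r in ab0.
Qed.


Record lr_basis X Y P : Prop := LRBasis {
  lr_basis_unit : P \in unitmx;
  lr_basis_lowering : lowering_mx (conjmx P X);
  lr_basis_raising : raising_mx (conjmx P Y) }.

Lemma lr_basis_comm X Y Z Q : lr_basis Y Z Q -> is_diag_mx (conjmx Q X) ->
  comm_mx X (Y *m Z) /\ comm_mx X (Z *m Y).
Proof.
move=> [uQ lowY raiseZ] XQ.
split; apply/(comm_mx_conjmx _ _ uQ); rewrite conjmxM_unit //; apply: diag_comm_mx => //.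
  exact: mul_lowering_raising_diag.
exact: mul_raising_lowering_diag.
Qed.

(* Both sides say that z X^k = 0. *)
Lemma head_supp_tail_supp X Y Z P Q k z : lr_basis X Y P -> lr_basis Z X Q ->
  head_supp k (coords P z) <-> tail_supp k (coords Q z).
Proof.
move=> [uP lowX _] [uQ _ raiseX]; elim: k z => [|k IH] z.
  by rewrite head_supp0 tail_supp0 !coords_eq0.
rewrite -(head_supp_mul_lowering _ _ lowX) -(tail_supp_mul_raising _ _ raiseX).
by rewrite -!coords_mul //; apply: IH.
Qed.

Lemma head_supp_coords_mul A B C P Q k z : lr_basis A B P -> lr_basis C A Q ->
  head_supp k (coords P z) -> head_supp k.+1 (coords P (z *m C)).
Proof.
move=> bP bQ; rewrite !(head_supp_tail_supp _ _ bP bQ) coords_mul ?(lr_basis_unit bQ) //.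
exact: tail_supp_mul_lowering (lr_basis_lowering bQ).
Qed.

Lemma tail_supp_coords_mul A B C P Q k z : lr_basis A B P -> lr_basis B C Q ->
  tail_supp k (coords P z) -> tail_supp k.+1 (coords P (z *m C)).
Proof.
move=> bP bQ; rewrite -!(head_supp_tail_supp _ _ bQ bP) coords_mul ?(lr_basis_unit bQ) //.
exact: head_supp_mul_raising (lr_basis_raising bQ).
Qed.

End LRBases.

Section DecompositionBasis.
Variables (F : fieldType) (d : nat).
Local Notation n := d.+1.
Local Notation M := 'M[F]_n.
Variable Vs : nat -> M.
Hypothesis decV : decomposition Vs.
Implicit Types X : M.

Definition dec_basis : M := \matrix_(i < n) nz_row (Vs i).
Local Notation P := dec_basis.

Lemma row_dec_basis (i : 'I_n) : (row i P == Vs i)%MS.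
Proof.
have [rk _] := decV; have rk1 : \rank (Vs i) = 1%N by rewrite rk // -ltnS.
have nz : nz_row (Vs i) != 0 by rewrite nz_row_eq0 -mxrank_eq0 rk1.
rewrite rowK nz_row_sub /=; have := mxrank_leqif_sup (nz_row_sub (Vs i)).
by rewrite rank_rV nz rk1 => -[_ <-].
Qed.

Lemma dec_basis_unit : P \in unitmx.
Proof.
have [_ [/andP[_ full] _]] := decV; rewrite -row_full_unit -sub1mx (submx_trans full) //.
by apply/sumsmx_subP => i _; have /andP[_ /submx_trans->] := row_dec_basis i; rewrite ?row_sub.
Qed.

Lemma row_dec_basis_comp_proj (k i : 'I_n) :
  row k P *m comp_proj Vs i = (k == i)%:R *: row k P.
Proof.
have [_ [_ /mxdirect_sumsP dx]] := decV; have /andP[sVk _] := row_dec_basis k.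
have -> : comp_proj Vs i = proj_mx (Vs i) (\sum_(j < n | true && (j != i)) Vs j)%MS.
  by congr proj_mx; apply: eq_bigl.
case: eqP => [ki|ne]; first by rewrite scale1r proj_mx_id ?dx // -ki.
rewrite scale0r proj_mx_0 ?dx //; apply: (sumsmx_sup k) => //; exact/eqP.
Qed.

Lemma conjmx_comp_proj (i : 'I_n) : conjmx P (comp_proj Vs i) = delta_mx i i.
Proof.
apply/row_matrixP => k; rewrite conjumx ?dec_basis_unit // !row_mul row_dec_basis_comp_proj.
rewrite -scalemxAl -/(coords P _) coords_row ?dec_basis_unit //.
by apply/rowP => j; rewrite !mxE eqxx; case: eqP => [->|]; rewrite ?mul1r ?mul0r.
Qed.

Lemma row_dec_basis_mul X (i k : 'I_n) : (Vs i *m X == Vs k)%MS ->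
  exists2 a, a != 0 & row i P *m X = a *: row k P.
Proof.
move=> /andP[sub1 sub2]; have /eqmxP eq_i := row_dec_basis i.
have /andP[_ sub_k] := row_dec_basis k; have eqX := eqmxMr X eq_i.
have /sub_rVP[a ea] : (row i P *m X <= row k P)%MS by rewrite eqX (submx_trans sub1).
exists a => //; apply/eqP => a0; move: ea; rewrite a0 scale0r => X0.
have [rk _] := decV; move: sub2; rewrite -eqX X0 => /submx0null/eqP.
by rewrite -mxrank_eq0 rk // -ltnS.
Qed.

Lemma row_dec_basis_mul0 X (i : 'I_n) : Vs i *m X = 0 -> row i P *m X = 0.
Proof.
have /andP[sub _] := row_dec_basis i.
by move=> X0; apply: (submx0null (m2 := n)); rewrite -X0 submxMr.
Qed.

Lemma lowers_lowering_mx X : lowers X Vs -> lowering_mx (conjmx P X).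
Proof.
have uP := dec_basis_unit; move=> [lowX lowX0] [[|i] hi] j.
  by rewrite conjmx_row_eq0 ?eqxx ?row_dec_basis_mul0.
have hi' : (i < n)%N by apply: ltnW.
have [a a0 e] := @row_dec_basis_mul X (Ordinal hi) (Ordinal hi') (lowX i.+1 hi).
by rewrite (conjmx_shift_neq0 uP a0 e) -val_eqE /= eqSS eq_sym.
Qed.

Lemma raises_raising_mx X : raises X Vs -> raising_mx (conjmx P X).
Proof.
have uP := dec_basis_unit; move=> [raiseX raiseX0] [i hi] j.
have [id|di] := ltnP i d; last first.
  have ei : i = d by apply/eqP; rewrite eqn_leq di -ltnS hi.
  subst i; rewrite conjmx_row_eq0 ?row_dec_basis_mul0 // eqxx.
  by apply/esym/negbTE; rewrite neq_ltn ltn_ord.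
have [a a0 e] := @row_dec_basis_mul X (Ordinal hi) (Ordinal (id : i.+1 < n)%N) (raiseX i id).
by rewrite (conjmx_shift_neq0 uP a0 e) -val_eqE.
Qed.

Lemma centralizes_comp_proj X :
  (forall i, (i <= d)%N -> X *m comp_proj Vs i = comp_proj Vs i *m X) <->
  is_diag_mx (conjmx P X).
Proof.
have uP := dec_basis_unit; rewrite -comm_delta_diag; split=> h i.
  by rewrite -conjmx_comp_proj; apply/(comm_mx_conjmx _ _ uP); apply: h (leq_ord i).
move=> hi; apply/(comm_mx_conjmx _ _ uP).
by rewrite (conjmx_comp_proj (Ordinal (hi : (i < n)%N))).
Qed.

Lemma mxtrace_comp_proj Y (i : 'I_n) : \tr (Y *m comp_proj Vs i) = conjmx P Y i i.
Proof.
have uP := dec_basis_unit.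
rewrite -mxtrace_mul_delta -conjmx_comp_proj -conjmxM_unit // conjumx //.
by rewrite [RHS]mxtrace_mulC mulKmx.
Qed.

Lemma sum_even_comp_proj :
  \sum_(j < (d./2).+1) comp_proj Vs (2 * j)%N = conjmx (invmx P) even_diag.
Proof.
have uP := dec_basis_unit.
rewrite conjVmx // -sum_even_delta mulmx_sumr mulmx_suml; apply: eq_bigr => j _.
have lt2 : (2 * j < n)%N by have := ltn_ord j; lia.
have -> : inord (2 * j)%N = Ordinal lt2 by apply/val_inj; rewrite /= inordK.
by rewrite -(conjmx_comp_proj (Ordinal lt2)) conjumx // !mulmxA mulVmx // mul1mx mulmxKV.
Qed.

End DecompositionBasis.

Lemma XY_decomposition_lr_basis (F : fieldType) (d : nat) (X Y : 'M[F]_d.+1) Vs :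
  XY_decomposition X Y Vs -> lr_basis X Y (dec_basis Vs).
Proof.
move=> [decV [lowX raiseY]]; split; first exact: dec_basis_unit.
- exact: lowers_lowering_mx.
- exact: raises_raising_mx.
Qed.

Section LRTriple.
Variables (F : fieldType) (d : nat).
Local Notation n := d.+1.
Local Notation M := 'M[F]_n.
Variables (A B C P P' P'' : M).
Hypotheses (bAB : lr_basis A B P) (bBC : lr_basis B C P') (bCA : lr_basis C A P'').
Let uP := lr_basis_unit bAB.
Let uP' := lr_basis_unit bBC.
Let uP'' := lr_basis_unit bCA.

Lemma conjmx_C_above (i j : 'I_n) : (i.+1 < j)%N -> conjmx P C i j = 0.
Proof.
have hd : head_supp i.+1 (coords P (row i P)) by rewrite coords_row //; apply: head_supp_delta.
by move=> hij; rewrite conjmxE //; apply: (head_supp_coords_mul bAB bCA hd).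
Qed.

Lemma conjmx_C_below (i j : 'I_n) : (j.+1 < i)%N -> conjmx P C i j = 0.
Proof.
have hd : tail_supp (d - i).+1 (coords P (row i P)).
  by rewrite coords_row //; apply: tail_supp_delta.
move=> hij; rewrite conjmxE //; apply: (tail_supp_coords_mul bAB bBC hd).
by have := ltn_ord i; lia.
Qed.

Lemma conjmx_C_superdiag_neq0 (k : 'I_n) : (k < d)%N -> conjmx P C k (inord k.+1) != 0.
Proof.
move=> kd; apply/eqP => C0.
(* Then C preserves ker A^(k+1), yet it maps vector d-k of P'' in it to vector d-k-1 out of it. *)
have C_head z : head_supp k.+1 (coords P z) -> head_supp k.+1 (coords P (z *m C)).
  move=> h m hm; rewrite coords_mul // mxE big1 // => j _.
  have [hj|hj] := leqP k.+1 j; first by rewrite h ?mul0r.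
  have [hjm|hjm] := leqP j.+2 m; first by rewrite conjmx_C_above ?mulr0.
  have -> : j = k by apply/val_inj => /=; lia.
  have -> : m = inord k.+1 by apply/val_inj; rewrite /= inordK; lia.
  by rewrite C0 mulr0.
pose i : 'I_n := inord (d - k); pose j : 'I_n := inord (d - k).-1.
have hy : tail_supp k.+1 (coords P'' (row i P'')).
  by rewrite coords_row //; have := tail_supp_delta i; rewrite inordK ?subKn //; lia.
have Cij : conjmx P'' C i j != 0 by rewrite (lr_basis_lowering bCA) !inordK //; lia.
have jk : (j + k.+1 <= d)%N by rewrite inordK; lia.
move/(head_supp_tail_supp _ _ bAB bCA)/C_head/(head_supp_tail_supp _ _ bAB bCA): hy.
rewrite coords_mul // coords_row // -rowE => /(_ j jk); rewrite mxE => /eqP.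
by rewrite (negbTE Cij).
Qed.

Section Centralizer.
Variable X : M.
Hypotheses (XP : is_diag_mx (conjmx P X)) (XP' : is_diag_mx (conjmx P' X)).
Let f i := conjmx P X (inord i) (inord i).

Lemma conjmx_comm_BC_CB :
  comm_mx (conjmx P X) (conjmx P B *m conjmx P C) /\
  comm_mx (conjmx P X) (conjmx P C *m conjmx P B).
Proof.
have [XBC XCB] := lr_basis_comm bBC XP'.
by rewrite -!conjmxM_unit //; split; apply/comm_mx_conjmx.
Qed.

Lemma centralizer_diag_period2 i : (i.+2 <= d)%N -> f i = f i.+2.
Proof.
move=> hi; have [_ _ raiseB] := bAB; pose k : 'I_n := inord i.+1.
have Bnz : conjmx P B (inord i) k != 0 by rewrite raiseB /= !inordK //; lia.
have Cnz : conjmx P C k (inord i.+2) != 0.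
  have ek : inord k.+1 = inord i.+2 :> 'I_n by rewrite /k inordK //; lia.
  by rewrite -ek conjmx_C_superdiag_neq0 // /k inordK //; lia.
apply: (diag_comm_mx_entry XP (proj1 conjmx_comm_BC_CB)).
rewrite (mulmx_row_single k) ?mulf_neq0 // => m ne; apply: raising_mx_eq0 => //.
by apply: contra ne => /eqP e; apply/eqP/val_inj; rewrite /= e !inordK //; lia.
Qed.

Lemma centralizer_diag_adjacent (j : 'I_n) : (0 < d)%N -> conjmx P C j j != 0 ->
  exists2 i, (i < d)%N & f i = f i.+1.
Proof.
move=> d0 Cj; have [_ _ raiseB] := bAB; have [XBC XCB] := conjmx_comm_BC_CB.
have [jd|dj] := ltnP j d.
  exists j => //; rewrite /f inord_val; apply: (diag_comm_mx_entry XP XCB).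
  rewrite (mulmx_col_single j) => [|m ne]; last first.
    apply: raising_mx_eq0 => //; apply: contra ne; rewrite inordK // => /eqP[e].
    by apply/eqP/val_inj.
  by rewrite mulf_eq0 negb_or Cj raiseB inordK ?eqxx.
exists d.-1; first lia.
have ej : inord d.-1.+1 = j by apply/val_inj; rewrite /= inordK; have := ltn_ord j; lia.
rewrite /f ej; apply: (diag_comm_mx_entry XP XBC).
rewrite (mulmx_row_single j) => [|m ne]; last first.
  apply: raising_mx_eq0 => //; apply: contra ne => /eqP e; apply/eqP/val_inj.
  by rewrite /= e inordK; have := ltn_ord j; lia.
rewrite mulf_eq0 negb_or Cj raiseB /= inordK; last lia.
by rewrite andbT; apply/eqP; have := ltn_ord j; lia.
Qed.

Lemma centralizer_diag_parity i : (i <= d)%N -> f i = f (odd i).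
Proof. exact: (@period2_eq_odd _ f d centralizer_diag_period2). Qed.

Lemma centralizer_diag_entry (a : 'I_n) : conjmx P X a a = f (odd a).
Proof. by rewrite -centralizer_diag_parity ?leq_ord // /f inord_val. Qed.

Lemma centralizer_scalar : (0 < d)%N -> (exists j, conjmx P C j j != 0) ->
  exists c, X = c%:M.
Proof.
move=> d0 [j /(centralizer_diag_adjacent d0)[i id fi]].
have f01 : f 0 = f 1.
  move: fi; rewrite (centralizer_diag_parity (ltnW id)) (centralizer_diag_parity id) /=.
  by case: (odd i) => /= ->.
exists (f 0); apply: (conjmx_unit_inj uP); rewrite conjmx_scalar ?row_free_unit //.
have /diag_mxP[e De] := XP; apply/matrixP => a b; rewrite [RHS]mxE.
case: (eqVneq a b) => [<-|ne]; last by rewrite De mxE (negbTE ne).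
by rewrite centralizer_diag_entry mulr1n; case: (odd a).
Qed.

Lemma centralizer_even_diag : exists a b, X = a%:M + b *: conjmx (invmx P) even_diag.
Proof.
exists (f 1), (f 0 - f 1); apply: (conjmx_unit_inj uP); rewrite conjmx_scalarD // conjmxVK //.
have /diag_mxP[e De] := XP; apply/matrixP => a b.
case: (eqVneq a b) => [<-|ne]; last by rewrite De !mxE (negbTE ne) !mulr0n mulr0 addr0.
rewrite centralizer_diag_entry !mxE eqxx !mulr1n.
by case: (odd a); rewrite /= ?mulr0 ?mulr1 ?addr0 // addrC subrK.
Qed.

End Centralizer.

Section Bipartite.
Hypothesis C_diag0 : forall j : 'I_n, conjmx P C j j = 0.

Lemma parity_supp_mul_C b z : parity_supp b z -> parity_supp (~~ b) (z *m conjmx P C).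
Proof.
move=> h m hm; rewrite mxE big1 // => j _.
case: (eqVneq (odd j) b) => [oj|/(h j)->]; last by rewrite mul0r.
have [/conjmx_C_above->|le1] := ltnP j.+1 m; first by rewrite mulr0.
have [/conjmx_C_below->|le2] := ltnP m.+1 j; first by rewrite mulr0.
case: (eqVneq j m) => [->|ne]; first by rewrite C_diag0 mulr0.
have /orP[] : (m == j.+1 :> nat) || (j == m.+1 :> nat).
  by move: ne; rewrite -val_eqE /=; case: ltngtP le1 le2 => //; lia.
all: by move/eqP=> e; move: hm; rewrite -oj e /= ?negbK eqxx.
Qed.

Lemma parity_supp_chain (w : nat -> 'rV[F]_n) b :
  parity_supp b (coords P (w 0)) -> (forall t, (t < d)%N -> (w t.+1 <= w t *m C)%MS) ->
  forall t, (t <= d)%N -> parity_supp (b (+) odd t) (coords P (w t)).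
Proof.
move=> w0 step; elim=> [|t IH] ht; first by rewrite addbF.
apply: parity_supp_submx (submxMr _ (step t ht)) _.
by rewrite -/(coords P _) coords_mul // /= addbN; apply/parity_supp_mul_C/IH/ltnW.
Qed.

(* P' and P'' arise from ker B and ker A, i.e. from the last and the first vector of P, by
   iterating C. *)
Lemma parity_rows_BC (i : 'I_n) : parity_supp (odd (d + i)) (coords P (row i P')).
Proof.
have [_ lowB raiseC] := bBC; have [_ _ raiseB] := bAB.
pose w t := row (inord t) P' : 'rV[F]_n.
have w0 : parity_supp (odd d) (coords P (w 0)).
  have wB : w 0 *m B = 0.
    by rewrite (row_mul_lowering _ uP' lowB) (lowering_mx_eq0 lowB) ?scale0r // !inordK.
  apply/tail_supp1_parity/(tail_supp_mul_raising _ _ raiseB).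
  by rewrite -coords_mul // wB; apply/tail_supp0; rewrite /coords mul0mx.
have step t : (t < d)%N -> (w t.+1 <= w t *m C)%MS.
  move=> td; have e : inord (inord t : 'I_n).+1 = inord t.+1 :> 'I_n by rewrite inordK //; lia.
  have nz : conjmx P' C (inord t) (inord t.+1) != 0 by rewrite raiseC !inordK //; lia.
  by rewrite /w (row_mul_raising _ uP' raiseC) e eqmx_scale.
by have := parity_supp_chain w0 step (leq_ord i); rewrite oddD /w inord_val.
Qed.

Lemma parity_rows_CA (i : 'I_n) : parity_supp (odd (d - i)) (coords P (row i P'')).
Proof.
have [_ lowC raiseA] := bCA; have [_ lowA _] := bAB.
pose w t := row (inord (d - t)) P'' : 'rV[F]_n.
have w0 : parity_supp false (coords P (w 0)).
  have wA : w 0 *m A = 0.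
    rewrite (row_mul_raising _ uP'' raiseA) (raising_mx_eq0 raiseA) ?scale0r //.
    by rewrite subn0 (inordK (ltnSn d)) neq_ltn ltn_ord.
  apply/head_supp1_parity/(head_supp_mul_lowering _ _ lowA).
  by rewrite -coords_mul // wA; apply/head_supp0; rewrite /coords mul0mx.
have step t : (t < d)%N -> (w t.+1 <= w t *m C)%MS.
  move=> td; have e : inord (inord (d - t) : 'I_n).-1 = inord (d - t.+1) :> 'I_n.
    by apply/val_inj; rewrite /= !inordK; lia.
  have nz : conjmx P'' C (inord (d - t)) (inord (d - t.+1)) != 0 by rewrite lowC !inordK; lia.
  by rewrite /w (row_mul_lowering _ uP'' lowC) e eqmx_scale.
have := parity_supp_chain w0 step (leq_subr i d); rewrite /w subKn ?inord_val //.
by rewrite -ltnS.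
Qed.

Lemma even_centralizer :
  let J := conjmx (invmx P) even_diag in
  [/\ is_diag_mx (conjmx P J), is_diag_mx (conjmx P' J) & is_diag_mx (conjmx P'' J)].
Proof.
split; first by rewrite conjmxVK // diag_mx_is_diag.
  by apply: conjmx_eigen_rows_diag => // i; eexists; apply/mul_even_diag_conj/parity_rows_BC.
by apply: conjmx_eigen_rows_diag => // i; eexists; apply/mul_even_diag_conj/parity_rows_CA.
Qed.

End Bipartite.

End LRTriple.

Lemma lr_triple_centralizer_scalar (F : fieldType) (d : nat) (A B C P P' P'' X : 'M[F]_d.+1) :
  lr_basis A B P -> lr_basis B C P' -> lr_basis C A P'' ->
  [/\ is_diag_mx (conjmx P X), is_diag_mx (conjmx P' X) & is_diag_mx (conjmx P'' X)] ->
  (0 < d)%N ->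
  (exists j, [|| conjmx P C j j != 0, conjmx P' A j j != 0 | conjmx P'' B j j != 0]) ->
  exists c, X = c%:M.
Proof.
move=> bAB bBC bCA [XP XP' XP''] d0 [j /or3P[Cj|Aj|Bj]].
- exact: (centralizer_scalar bAB bBC bCA XP XP' d0 (ex_intro _ j Cj)).
- exact: (centralizer_scalar bBC bCA bAB XP' XP'' d0 (ex_intro _ j Aj)).
- exact: (centralizer_scalar bCA bAB bBC XP'' XP d0 (ex_intro _ j Bj)).
Qed.

Lemma idem_centralizer_diag (F : fieldType) (d : nat) (Vs Vs' Vs'' : nat -> 'M[F]_d.+1) X :
  decomposition Vs -> decomposition Vs' -> decomposition Vs'' ->
  (forall i, (i <= d)%N -> [/\ X *m comp_proj Vs i = comp_proj Vs i *m X,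
     X *m comp_proj Vs' i = comp_proj Vs' i *m X & X *m comp_proj Vs'' i = comp_proj Vs'' i *m X])
  <-> [/\ is_diag_mx (conjmx (dec_basis Vs) X), is_diag_mx (conjmx (dec_basis Vs') X)
        & is_diag_mx (conjmx (dec_basis Vs'') X)].
Proof.
move=> dV dV' dV''; split=> [h|[/(centralizes_comp_proj dV) h /(centralizes_comp_proj dV') h'
                                 /(centralizes_comp_proj dV'') h''] i hi].
  by split; apply/centralizes_comp_proj => // i /h[].
by split; [apply: h | apply: h' | apply: h''].
Qed.

Lemma dim1_scalar_mx (F : fieldType) (d : nat) (X : 'M[F]_d.+1) : d = 0%N -> X = (X 0 0)%:M.
Proof. by move=> d0; subst d; apply: mx11_scalar. Qed.

Theorem proposition19p5 (F : fieldType) (d : nat) (A B C : 'M[F]_(d.+1))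
  (Vs Vs' Vs'' : nat -> 'M[F]_(d.+1)) :
  LR_triple A B C ->
  XY_decomposition A B Vs -> XY_decomposition B C Vs' -> XY_decomposition C A Vs'' ->
  let E := comp_proj Vs in
  let E' := comp_proj Vs' in
  let E'' := comp_proj Vs'' in
  let bipartite :=
    forall i, (i <= d)%N ->
      [/\ \tr (C *m E i) = 0, \tr (A *m E' i) = 0 & \tr (B *m E'' i) = 0] in
  let idem_centralizer (X : 'M[F]_(d.+1)) :=
    forall i, (i <= d)%N ->
      [/\ X *m E i = E i *m X, X *m E' i = E' i *m X & X *m E'' i = E'' i *m X] in
  let J := \sum_(j < (d./2).+1) E (2 * j)%N in
  (d = 0%N ->
     (forall X, idem_centralizer X <-> exists c : F, X = c%:M) /\
     (forall c : F, c%:M = 0 :> 'M[F]_(d.+1) -> c = 0)) /\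
  (~ bipartite ->
     (forall X, idem_centralizer X <-> exists c : F, X = c%:M) /\
     (forall c : F, c%:M = 0 :> 'M[F]_(d.+1) -> c = 0)) /\
  (bipartite -> (0 < d)%N ->
     (forall X, idem_centralizer X <-> exists a b : F, X = a%:M + b *: J) /\
     (forall a b : F, a%:M + b *: J = 0 -> a = 0 /\ b = 0)).
Proof.
move=> _ dAB dBC dCA E E' E'' bip idc J.
have [dV _] := dAB; have [dV' _] := dBC; have [dV'' _] := dCA.
have bAB := XY_decomposition_lr_basis dAB; have bBC := XY_decomposition_lr_basis dBC.
have bCA := XY_decomposition_lr_basis dCA.
have cent X : idc X <-> _ := idem_centralizer_diag X dV dV' dV''.
have scalar_cent c : idc c%:M by move=> i _; split; rewrite scalar_mxC.
have scalar_free c : c%:M = 0 :> 'M[F]_d.+1 -> c = 0.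
  by move/matrixP/(_ 0 0); rewrite !mxE eqxx.
split; [|split].
- by move=> d0; split=> // X; split=> [_|[c ->] //]; exists (X 0 0); apply: dim1_scalar_mx.
- move=> nbip; split=> // X; split=> [/cent XD|[c ->] //].
  have [d0|d_gt0] := posnP d; first by exists (X 0 0); apply: dim1_scalar_mx.
  apply: (lr_triple_centralizer_scalar bAB bBC bCA XD d_gt0).
  have /forallPn[i] : ~~ [forall i : 'I_d.+1,
      [&& \tr (C *m E i) == 0, \tr (A *m E' i) == 0 & \tr (B *m E'' i) == 0]].
    apply/negP => /forallP h; apply: nbip => i hi.
    by have /and3P[/eqP-> /eqP-> /eqP->] := h (Ordinal (hi : (i < d.+1)%N)).
  by rewrite !negb_and /E /E' /E'' !mxtrace_comp_proj //; exists i.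
- move=> hbip d_gt0.
  have C0 j : conjmx (dec_basis Vs) C j j = 0.
    by have [+ _ _] := hbip j (leq_ord j); rewrite /E mxtrace_comp_proj.
  have -> : J = conjmx (invmx (dec_basis Vs)) even_diag := sum_even_comp_proj dV.
  have [JP JP' JP''] := even_centralizer bAB bBC bCA C0.
  split=> [X|a b]; last exact: scalar_even_diag_free (lr_basis_unit bAB) d_gt0.
  split=> [/cent[XP XP' _]|[a [b ->]]].
    exact: (centralizer_even_diag bAB bBC bCA XP XP').
  by apply/cent; split; (rewrite conjmx_scalarD; [apply: is_diag_scalarD | exact: dec_basis_unit]).
Qed.
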